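(* Under the coupling $\bar\pi_{\Lambda_N}$ described in the context, $o\in\mathcal C^{\Lambda_N}$ only if $o$ is connected to $\partial\Lambda_N$ in $\mathcal C^{\Lambda_N}$, i.e. only if there is a nearest-neighbor path of vertices of $\mathcal C^{\Lambda_N}$ from $o$ to a vertex adjacent to $\partial\Lambda_N$.
   Context: Fix $\beta>0$ and a realization of the field $\{h_v\}$. $u\sim v$ if $|u-v|_1=1$; $\partial A=\{v\in\mathbb Z^2\setminus A:u\sim v\text{ for some }u\in A\}$; $\Lambda_N=\{v\in\mathbb Z^2:|v|_\infty\le N\}$; $o$ the origin. $\mu^{\Lambda_N,\pm}$ is the Ising measure on $\Lambda_N$ with weights $e^{-\beta H^{\Lambda_N,\pm}}$, $H^{\Lambda_N,\pm}(\sigma)=-\big(\sum_{u\sim v,\,u,v\in\Lambda_N}\sigma_u\sigma_v\pm\sum_{u\sim v,\,u\in\Lambda_N,v\in\partial\Lambda_N}\sigma_u+\sum_{u\in\Lambda_N}\sigma_uh_u\big)$. The coupling $\bar\pi_{\Lambda_N}$ of $(\sigma^{\Lambda_N,+},\sigma^{\Lambda_N,-})$ is built by sequentially sampling vertices: whenever a vertex $v$ is sampled, given the already-sampled set $V$ and spins on it, let $p_\pm=\mu^{\Lambda_N,\pm}(\sigma_v=1\mid\sigma^{\Lambda_N,\pm}_V)$; draw $U$ uniform on $[0,1]$ and set $\sigma^{\Lambda_N,\pm}_v=-1$ iff $U\le1-p_\pm$. The order of sampling is: $\mathcal C^{\Lambda_N}$ denotes the set of already-sampled $v$ with $\sigma^{\Lambda_N,+}_v>\sigma^{\Lambda_N,-}_v$;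 set $A_0=\partial\Lambda_N$; for $k=0,1,2,\ldots$, at stage $k+1$ set $A_{k+1}=\emptyset$; if $A_k=\emptyset$, sample all remaining unsampled vertices of $\Lambda_N$ in an arbitrary fixed order and stop; otherwise sample (in an arbitrary fixed order) all not-yet-sampled vertices of $\Lambda_N$ adjacent to $A_k$, and add each newly sampled vertex lying in $\mathcal C^{\Lambda_N}$ to $A_{k+1}$. At the end, $\mathcal C^{\Lambda_N}=\{v\in\Lambda_N:\sigma^{\Lambda_N,+}_v>\sigma^{\Lambda_N,-}_v\}$. *)

From HB Require Import structures.
From mathcomp Require Import all_boot all_order all_algebra.
From mathcomp Require Import mathcomp_extra boolp reals.
From mathcomp.analysis Require Import sequences exp.
Set Implicit Arguments. Unset Strict Implicit. Unset Printing Implicit Defensive.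
Import Order.TTheory GRing.Theory Num.Theory.
Local Open Scope ring_scope.

Definition Z2 := (int * int)%type.

Definition adjZ (a b : Z2) : bool :=
  (absz (a.1 - b.1) + absz (a.2 - b.2) == 1)%N.

Definition nbrs4 (z : Z2) : seq Z2 :=
  [:: (z.1 + 1, z.2); (z.1 - 1, z.2); (z.1, z.2 + 1); (z.1, z.2 - 1)].

Definition inLam (N : nat) (z : Z2) : bool :=
  (`|z.1| <= N%:Z) && (`|z.2| <= N%:Z).

Definition bdry (N : nat) (z : Z2) : bool :=
  ~~ inLam N z && has (inLam N) (nbrs4 z).

(* Vertices of Lambda_N as a finite type: (i, j) represents (i - N, j - N). *)
Definition V (N : nat) := ('I_(2 * N).+1 * 'I_(2 * N).+1)%type.

Definition coord (N : nat) (v : V N) : Z2 :=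
  ((v.1 : nat)%:Z - N%:Z, (v.2 : nat)%:Z - N%:Z).

Definition adj (N : nat) (u v : V N) : bool := adjZ (coord u) (coord v).

Definition adj_bdry (N : nat) (v : V N) : bool := has (bdry N) (nbrs4 (coord v)).

Definition origin (N : nat) : V N := (inord N, inord N).

Definition spin (R : realType) (b : bool) : R := if b then 1 else -1.

Section Ising.
Variables (R : realType) (beta : R) (h : Z2 -> R) (N : nat).

(* H^{Lambda_N, s}(sigma); s = true is the + boundary condition, s = false the - one.
   Spins: true = +1, false = -1. The sum over unordered adjacent pairs in Lambda_N
   is written as half the sum over ordered pairs. *)
Definition Ham (s : bool) (sigma : {ffun V N -> bool}) : R :=
  - ( 2^-1 * (\sum_(u : V N) \sum_(v : V N | adj u v) spin R (sigma u) * spin R (sigma v))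
      + spin R s * (\sum_(u : V N) \sum_(z <- nbrs4 (coord u) | bdry N z) spin R (sigma u))
      + \sum_(u : V N) spin R (sigma u) * h (coord u)).

Definition weight (s : bool) (sigma : {ffun V N -> bool}) : R :=
  expR (- beta * Ham s sigma).

Definition wsum (s : bool) (P : pred {ffun V N -> bool}) : R :=
  \sum_(sigma : {ffun V N -> bool} | P sigma) weight s sigma.

Definition agree (Sv : {set V N}) (tau sigma : {ffun V N -> bool}) : bool :=
  [forall u in Sv, sigma u == tau u].

Definition condp (s : bool) (Sv : {set V N}) (tau : {ffun V N -> bool}) (v : V N) : R :=
  wsum s (fun sigma => agree Sv tau sigma && sigma v) / wsum s (agree Sv tau).

(* state: (sampled set, sigma^+, sigma^-) *)
Definition state := ({set V N} * {ffun V N -> bool} * {ffun V N -> bool})%type.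

Definition sample1 (U : V N -> R) (st : state) (v : V N) : state :=
  let: (Sv, sp, sm) := st in
  let pp := condp true Sv sp v in
  let pm := condp false Sv sm v in
  (v |: Sv,
   [ffun x => if x == v then ~~ (U v <= 1 - pp) else sp x],
   [ffun x => if x == v then ~~ (U v <= 1 - pm) else sm x]).

Definition sample_seq (U : V N -> R) (st : state) (l : seq (V N)) : state :=
  foldl (sample1 U) st l.

Definition inC (st : state) (v : V N) : bool :=
  let: (Sv, sp, sm) := st in (v \in Sv) && sp v && ~~ sm v.

(* A_k is represented by [first] (true iff k = 0, i.e. A_0 = \partial Lambda_N)
   and a set A of vertices of Lambda_N (used for k >= 1). *)
Definition adjA (first : bool) (A : {set V N}) (v : V N) : bool :=
  if first then adj_bdry v else [exists u in A, adj u v].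

(* Run the stages with fuel n; ord is the arbitrary fixed order.
   When A_k is empty (or the fuel runs out, which never happens for n large)
   all remaining vertices are sampled in the order ord. *)
Fixpoint stages (U : V N -> R) (ord : seq (V N)) (n : nat)
    (first : bool) (A : {set V N}) (st : state) : state :=
  let rest := [seq v <- ord | v \notin st.1.1] in
  match n with
  | 0 => sample_seq U st rest
  | n'.+1 =>
    if ~~ first && (A == set0) then sample_seq U st rest
    else
      let todo := [seq v <- ord | (v \notin st.1.1) && adjA first A v] in
      let st' := sample_seq U st todo in
      stages U ord n' false [set v in todo | inC st' v] st'
  end.

Definition init_state : state := (set0, [ffun => true], [ffun => true]).

Definition coupling (U : V N -> R) (ord : seq (V N)) : state :=
  stages U ord (#|{: V N}|.+2) true set0 init_state.

Definition Cset (U : V N -> R) (ord : seq (V N)) : pred (V N) :=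
  fun v => let: (_, sp, sm) := coupling U ord in sp v && ~~ sm v.

End Ising.

From Pilot Require Import Defs.
From HB Require Import structures.
From mathcomp Require Import all_boot all_order all_algebra.
From mathcomp Require Import mathcomp_extra boolp reals.
From mathcomp.analysis Require Import sequences exp.
From mathcomp Require Import ring lra.
Import Order.TTheory GRing.Theory Num.Theory.
Local Open Scope ring_scope.
Set Implicit Arguments. Unset Strict Implicit. Unset Printing Implicit Defensive.

(* The + and - Boltzmann weights satisfy the lattice condition
   w+(x \/ y) w-(x /\ y) >= w+(x) w-(y), so by the Ahlswede-Daykin four
   functions theorem the conditional probability of a + spin under the +
   measure dominates the one under the - measure whenever the conditioning
   configurations are ordered; hence the coupling keeps sigma+ >= sigma-.
   While A_k is non-empty, every newly sampled vertex of C is adjacent to a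
   vertex of A_k, so every vertex of C is joined inside C to a neighbour of the
   outer boundary.  Once A_k is empty, every sampled vertex with an unsampled
   neighbour carries equal spins and no unsampled vertex touches the outer
   boundary; the two Hamiltonians then differ by a constant on configurations
   extending the sampled ones (domain Markov property), so the remaining
   vertices receive equal spins and C does not grow. *)

(** * The four functions theorem *)

Section FourFunctions.
Variable R : realFieldType.

Lemma four_functions_two_point (a0 a1 b0 b1 c0 c1 d0 d1 : R) :
  0 <= a0 -> 0 <= a1 -> 0 <= b0 -> 0 <= b1 -> 0 <= c0 -> 0 <= c1 -> 0 <= d0 -> 0 <= d1 ->
  a0 * b0 <= c0 * d0 -> a0 * b1 <= c1 * d0 -> a1 * b0 <= c1 * d0 -> a1 * b1 <= c1 * d1 ->
  (a0 + a1) * (b0 + b1) <= (c0 + c1) * (d0 + d1).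
Proof.
move=> ha0 ha1 hb0 hb1 hc0 hc1 hd0 hd1 h00 h01 h10 h11.
have hx : 0 <= c1 * d0 by apply: mulr_ge0.
suff cross : a0 * b1 + a1 * b0 <= c1 * d0 + c0 * d1.
  have -> : (a0 + a1) * (b0 + b1) = a0 * b0 + a1 * b1 + (a0 * b1 + a1 * b0) by ring.
  have -> : (c0 + c1) * (d0 + d1) = c0 * d0 + c1 * d1 + (c1 * d0 + c0 * d1) by ring.
  by apply: lerD => //; apply: lerD.
have [x0|xpos] := eqVneq (c1 * d0) 0.
  have e1 : a0 * b1 = 0 by apply/eqP; rewrite eq_le mulr_ge0 // andbT -x0.
  have e2 : a1 * b0 = 0 by apply/eqP; rewrite eq_le mulr_ge0 // andbT -x0.
  by rewrite e1 e2 x0 !add0r; apply: mulr_ge0.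
have xp : 0 < c1 * d0 by rewrite lt_def xpos hx.
(* With x := c1 d0, y := c0 d1, p := a0 b1, q := a1 b0:
   (x - p) (x - q) >= 0 and p q <= x y give x (p + q) <= x (x + y). *)
have prod : (a0 * b1) * (a1 * b0) <= (c1 * d0) * (c0 * d1).
  have -> : (a0 * b1) * (a1 * b0) = (a0 * b0) * (a1 * b1) by ring.
  have -> : (c1 * d0) * (c0 * d1) = (c0 * d0) * (c1 * d1) by ring.
  by apply: ler_pM => //; apply: mulr_ge0.
have q : 0 <= (c1 * d0 - a0 * b1) * (c1 * d0 - a1 * b0).
  by apply: mulr_ge0; rewrite subr_ge0.
rewrite -(ler_pM2l xp); nra.
Qed.

Definition four_functions (X : finType) (join meet : X -> X -> X) : Prop :=
  forall f1 f2 f3 f4 : X -> R,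
  (forall x, 0 <= f1 x) -> (forall x, 0 <= f2 x) ->
  (forall x, 0 <= f3 x) -> (forall x, 0 <= f4 x) ->
  (forall x y, f1 x * f2 y <= f3 (join x y) * f4 (meet x y)) ->
  (\sum_x f1 x) * (\sum_x f2 x) <= (\sum_x f3 x) * (\sum_x f4 x).

Lemma four_functions_bool : four_functions orb andb.
Proof.
move=> f1 f2 f3 f4 h1 h2 h3 h4 H; rewrite !big_bool.
have := four_functions_two_point (h1 false) (h1 true) (h2 false) (h2 true)
  (h3 false) (h3 true) (h4 false) (h4 true)
  (H false false) (H false true) (H true false) (H true true).
by rewrite /= !(addrC (_ true)).
Qed.

Lemma four_functions_prod (X Y : finType) joinX meetX joinY meetY :
  four_functions joinX meetX -> four_functions joinY meetY ->
  four_functions (fun p q : X * Y => (joinX p.1 q.1, joinY p.2 q.2))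
                 (fun p q : X * Y => (meetX p.1 q.1, meetY p.2 q.2)).
Proof.
move=> FX FY f1 f2 f3 f4 h1 h2 h3 h4 H.
have sum_pair (f : X * Y -> R) : \sum_p f p = \sum_x \sum_y f (x, y).
  by rewrite pair_bigA; apply: eq_bigr => -[].
rewrite !sum_pair.
by apply: FX => [x|x|x|x|x x']; [exact: sumr_ge0..|apply: FY].
Qed.

Lemma four_functions_can (X Y : finType) joinX meetX joinY meetY
    (g : X -> Y) (g' : Y -> X) :
  cancel g g' -> cancel g' g ->
  {morph g : x y / joinX x y >-> joinY x y} ->
  {morph g : x y / meetX x y >-> meetY x y} ->
  four_functions joinY meetY -> four_functions joinX meetX.
Proof.
move=> gK g'K g_join g_meet FY f1 f2 f3 f4 h1 h2 h3 h4 H.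
have g'_bij : {on [pred _ | true], bijective g'} by exists g => y _; rewrite ?g'K ?gK.
rewrite !(reindex g' g'_bij) /=.
apply: FY => // a b.
have g'_join : joinX (g' a) (g' b) = g' (joinY a b).
  by apply: (can_inj gK); rewrite g_join !g'K.
have g'_meet : meetX (g' a) (g' b) = g' (meetY a b).
  by apply: (can_inj gK); rewrite g_meet !g'K.
by rewrite -g'_join -g'_meet.
Qed.

Definition fjoin (T : finType) (f g : {ffun T -> bool}) : {ffun T -> bool} :=
  [ffun i => f i || g i].
Definition fmeet (T : finType) (f g : {ffun T -> bool}) : {ffun T -> bool} :=
  [ffun i => f i && g i].

Lemma four_functions_ord0 : four_functions (@fjoin 'I_0) (@fmeet 'I_0).
Proof.
have ffun0 (x : {ffun 'I_0 -> bool}) : x = [ffun => false] by apply/ffunP => -[].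
move=> f1 f2 f3 f4 h1 h2 h3 h4 H.
have sum0 (f : {ffun 'I_0 -> bool} -> R) : \sum_x f x = f [ffun => false].
  by apply: big_pred1 => x /=; rewrite (ffun0 x) eqxx.
rewrite !sum0.
by have := H [ffun => false] [ffun => false]; rewrite (ffun0 (fjoin _ _)) (ffun0 (fmeet _ _)).
Qed.

Definition ffun_uncons n (f : {ffun 'I_n.+1 -> bool}) : bool * {ffun 'I_n -> bool} :=
  (f ord0, [ffun i => f (lift ord0 i)]).
Definition ffun_cons n (p : bool * {ffun 'I_n -> bool}) : {ffun 'I_n.+1 -> bool} :=
  [ffun i => if unlift ord0 i is Some j then p.2 j else p.1].

Lemma four_functions_ord n : four_functions (@fjoin 'I_n) (@fmeet 'I_n).
Proof.
elim: n => [|n IH]; first exact: four_functions_ord0.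
apply: (@four_functions_can _ _ _ _ (fun p q => (p.1 || q.1, fjoin p.2 q.2))
   (fun p q => (p.1 && q.1, fmeet p.2 q.2)) (@ffun_uncons n) (@ffun_cons n)).
- move=> f; apply/ffunP => i; rewrite ffunE.
  by case: unliftP => [j ->|->] /=; rewrite ?ffunE.
- move=> [b f]; rewrite /ffun_cons /ffun_uncons /= ffunE unlift_none; congr (_, _).
  by apply/ffunP => i; rewrite !ffunE liftK.
- by move=> x y; rewrite /ffun_uncons !ffunE; congr (_, _); apply/ffunP => i; rewrite !ffunE.
- by move=> x y; rewrite /ffun_uncons !ffunE; congr (_, _); apply/ffunP => i; rewrite !ffunE.
- exact: four_functions_prod four_functions_bool IH.
Qed.

Lemma four_functions_ffun (T : finType) : four_functions (@fjoin T) (@fmeet T).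
Proof.
apply: (@four_functions_can _ _ _ _ (@fjoin _) (@fmeet _)
  (fun f : {ffun T -> bool} => [ffun i => f (enum_val i)])
  (fun g => [ffun x => g (enum_rank x)])).
- by move=> f; apply/ffunP => x; rewrite !ffunE enum_rankK.
- by move=> g; apply/ffunP => i; rewrite !ffunE enum_valK.
- by move=> x y; apply/ffunP => i; rewrite !ffunE.
- by move=> x y; apply/ffunP => i; rewrite !ffunE.
- exact: four_functions_ord.
Qed.

End FourFunctions.

(** * FKG and domain Markov properties of the Ising measures *)

Section IsingLattice.
Variables (R : realType) (beta : R) (h : Z2 -> R) (N : nat).

Local Notation config := {ffun V N -> bool}.

Definition pair_energy (x : config) : R :=
  \sum_(u : V N) \sum_(v : V N | adj u v) spin R (x u) * spin R (x v).
Definition bdry_energy (x : config) : R :=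
  \sum_(u : V N) \sum_(z <- nbrs4 (Defs.coord u) | bdry N z) spin R (x u).
Definition field_energy (x : config) : R :=
  \sum_(u : V N) spin R (x u) * h (Defs.coord u).

Lemma HamE s (x : config) :
  Ham h s x = - (2^-1 * pair_energy x + spin R s * bdry_energy x + field_energy x).
Proof. by []. Qed.

Lemma spin_mul_supermodular a b c d :
  spin R a * spin R c + spin R b * spin R d <=
  spin R (a || b) * spin R (c || d) + spin R (a && b) * spin R (c && d).
Proof. by case: a; case: b; case: c; case: d; rewrite /spin /=; lra. Qed.

Lemma spin_modular a b : spin R a + spin R b = spin R (a || b) + spin R (a && b).
Proof. by case: a; case: b; rewrite //= addrC. Qed.

Lemma ler_spin (a b : bool) : a ==> b -> spin R a <= spin R b.
Proof. by case: a; case: b; rewrite /spin //= => _; lra. Qed.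

Lemma pair_energy_supermodular (x y : config) :
  pair_energy x + pair_energy y <= pair_energy (fjoin x y) + pair_energy (fmeet x y).
Proof.
rewrite /pair_energy -!big_split /=; apply: ler_sum => u _.
rewrite -!big_split /=; apply: ler_sum => v _.
by rewrite !ffunE; apply: spin_mul_supermodular.
Qed.

Lemma bdry_energy_monotone (x y : config) :
  (forall u, x u ==> y u) -> bdry_energy x <= bdry_energy y.
Proof.
move=> xy; apply: ler_sum => u _; apply: ler_sum => z _; exact: ler_spin.
Qed.

Lemma field_energy_modular (x y : config) :
  field_energy x + field_energy y = field_energy (fjoin x y) + field_energy (fmeet x y).
Proof.
rewrite /field_energy -!big_split /=; apply: eq_bigr => u _.
by rewrite !ffunE -!mulrDl spin_modular.
Qed.

Lemma Ham_join_meet (x y : config) :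
  Ham h true (fjoin x y) + Ham h false (fmeet x y) <= Ham h true x + Ham h false y.
Proof.
rewrite !HamE /spin.
have hI := pair_energy_supermodular x y.
have hBx : bdry_energy x <= bdry_energy (fjoin x y).
  by apply: bdry_energy_monotone => u; rewrite ffunE; case: (x u).
have hBy : bdry_energy (fmeet x y) <= bdry_energy y.
  by apply: bdry_energy_monotone => u; rewrite ffunE; case: (x u); case: (y u).
have hF := field_energy_modular x y.
have hI2 : 2^-1 * pair_energy x + 2^-1 * pair_energy y <=
           2^-1 * pair_energy (fjoin x y) + 2^-1 * pair_energy (fmeet x y).
  by rewrite -!mulrDr ler_pM2l ?invr_gt0.
lra.
Qed.

Lemma weight_join_meet (x y : config) : 0 < beta ->
  weight beta h true x * weight beta h false y <=
  weight beta h true (fjoin x y) * weight beta h false (fmeet x y).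
Proof.
move=> beta_gt0; rewrite /weight -!expRD ler_expR -!mulrDr ler_nM2l ?oppr_lt0 //.
exact: Ham_join_meet.
Qed.

Lemma weight_gt0 s (x : config) : 0 < weight beta h s x.
Proof. exact: expR_gt0. Qed.

Lemma wsum_agree_gt0 s (S : {set V N}) (t : config) : 0 < wsum beta h s (agree S t).
Proof.
rewrite /wsum (bigD1 t) /=; last by apply/forall_inP.
by apply: ltr_wpDr; [apply: sumr_ge0 => x _; apply/ltW/weight_gt0|apply: weight_gt0].
Qed.

Lemma agreeP (S : {set V N}) (t x : config) u : agree S t x -> u \in S -> x u = t u.
Proof. by move/forall_inP/(_ u) => H uS; apply/eqP/H. Qed.

Section Ordered.
Variables (S : {set V N}) (tp tm : config) (v : V N).
Hypothesis tm_le_tp : forall u, u \in S -> tm u -> tp u.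

Lemma agree_fjoin (x y : config) : agree S tp x -> agree S tm y -> agree S tp (fjoin x y).
Proof.
move=> ax ay; apply/forall_inP => u uS; rewrite ffunE (agreeP ax uS) (agreeP ay uS).
by case E: (tm u); rewrite ?orbF ?orbT // tm_le_tp.
Qed.

Lemma agree_fmeet (x y : config) : agree S tp x -> agree S tm y -> agree S tm (fmeet x y).
Proof.
move=> ax ay; apply/forall_inP => u uS; rewrite ffunE (agreeP ax uS) (agreeP ay uS).
by case E: (tm u); rewrite ?andbF ?andbT // tm_le_tp.
Qed.

Lemma wsum_cross_le : 0 < beta ->
  wsum beta h true (fun x => agree S tp x && ~~ x v) *
  wsum beta h false (fun x => agree S tm x && x v) <=
  wsum beta h true (fun x => agree S tp x && x v) *
  wsum beta h false (fun x => agree S tm x && ~~ x v).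
Proof.
move=> beta_gt0; rewrite /wsum !(big_mkcond (fun x => agree _ _ x && _)) /=.
have g0 s (b : bool) (x : config) : 0 <= if b then weight beta h s x else 0.
  by case: b => //; apply/ltW/weight_gt0.
apply: four_functions_ffun => [x|x|x|x|x y]; try exact: g0.
case: ifP => [/andP[ax nxv]|_]; last by rewrite mul0r mulr_ge0.
case: ifP => [/andP[ay yv]|_]; last by rewrite mulr0 mulr_ge0.
rewrite agree_fjoin // agree_fmeet // !ffunE yv (negbTE nxv) orbT.
exact: weight_join_meet.
Qed.

Lemma wsum_split s (t : config) : wsum beta h s (agree S t) =
  wsum beta h s (fun x => agree S t x && x v) + wsum beta h s (fun x => agree S t x && ~~ x v).
Proof. by rewrite /wsum (bigID (fun x : config => x v)). Qed.

Lemma condp_monotone : 0 < beta -> condp beta h false S tm v <= condp beta h true S tp v.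
Proof.
move=> beta_gt0; rewrite /condp.
have := wsum_agree_gt0 true S tp; have := wsum_agree_gt0 false S tm.
have cross := wsum_cross_le beta_gt0.
rewrite !(wsum_split _).
set Ap := wsum _ _ true (fun x => _ && x v) in cross *.
set An := wsum _ _ true _ in cross *.
set Bp := wsum _ _ false (fun x => _ && x v) in cross *.
set Bn := wsum _ _ false _ in cross *.
move=> hB hA.
rewrite ler_pdivrMr // mulrAC ler_pdivlMr //.
by rewrite !mulrDr (mulrC Bp Ap) lerD2l mulrC.
Qed.

End Ordered.

Lemma adj_sym (u w : V N) : adj u w = adj w u.
Proof. by rewrite /adj /adjZ; congr (_ + _ == _)%N; rewrite -abszN opprB. Qed.

Section DomainMarkov.
Variables (S : {set V N}) (tp tm : config).
Hypothesis agree_on_inner_bdry : forall u w, u \in S -> w \notin S -> adj u w -> tp u = tm u.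
Hypothesis compl_off_outer_bdry : forall w, w \notin S -> ~~ adj_bdry w.

Definition with_tm (x : config) : config := [ffun u => if u \in S then tm u else x u].
Definition with_tp (x : config) : config := [ffun u => if u \in S then tp u else x u].

Lemma Ham_with_tm (x : config) : agree S tp x ->
  Ham h true x = Ham h false (with_tm x) + (Ham h true tp - Ham h false (with_tm tp)).
Proof.
move=> ax.
have eI : pair_energy x + pair_energy (with_tm tp) = pair_energy (with_tm x) + pair_energy tp.
  rewrite /pair_energy -!big_split /=; apply: eq_bigr => u _.
  rewrite -!big_split /=; apply: eq_bigr => w uw; rewrite !ffunE.
  case: (boolP (u \in S)) => uS; case: (boolP (w \in S)) => wS //.
  - by rewrite (agreeP ax uS) (agreeP ax wS) addrC.
  - by rewrite (agreeP ax uS) -(agree_on_inner_bdry uS wS uw).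
  - by rewrite (agreeP ax wS) -(agree_on_inner_bdry wS uS _) // adj_sym.
have eB : bdry_energy x + bdry_energy (with_tm x) = bdry_energy tp + bdry_energy (with_tm tp).
  rewrite /bdry_energy -!big_split /=; apply: eq_bigr => u _.
  case: (boolP (u \in S)) => uS; first by rewrite !ffunE uS (agreeP ax uS).
  by have := compl_off_outer_bdry uS; rewrite /adj_bdry => nb; rewrite !big_hasC // addr0.
have eF : field_energy x + field_energy (with_tm tp) = field_energy (with_tm x) + field_energy tp.
  rewrite /field_energy -!big_split /=; apply: eq_bigr => u _; rewrite !ffunE.
  by case: (boolP (u \in S)) => uS //; rewrite (agreeP ax uS) addrC.
rewrite !HamE /spin.
have eI2 : 2^-1 * pair_energy x + 2^-1 * pair_energy (with_tm tp) =
           2^-1 * pair_energy (with_tm x) + 2^-1 * pair_energy tp.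
  by rewrite -!mulrDr eI.
lra.
Qed.

Definition shift_const : R := expR (- beta * (Ham h true tp - Ham h false (with_tm tp))).

Lemma wsum_with_tm (P : pred config) : (forall x, P (with_tm x) = P x) ->
  wsum beta h true (fun x => agree S tp x && P x) =
  wsum beta h false (fun x => agree S tm x && P x) * shift_const.
Proof.
move=> P_with_tm; rewrite /wsum big_distrl /=.
rewrite (eq_bigr (fun x => weight beta h false (with_tm x) * shift_const)); last first.
  by move=> x /andP[ax _]; rewrite /weight (Ham_with_tm ax) mulrDr expRD.
symmetry; rewrite (reindex_onto with_tm with_tp) /=; last first.
  move=> y /andP[ay _]; apply/ffunP => u; rewrite !ffunE.
  by case: (boolP (u \in S)) => uS; rewrite ?(agreeP ay uS).
apply: eq_bigl => x.
have -> : agree S tm (with_tm x) by apply/forall_inP => u uS; rewrite ffunE uS.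
have -> : (with_tp (with_tm x) == x) = agree S tp x.
  apply/eqP/forall_inP => [<- u uS|H]; first by rewrite !ffunE uS.
  apply/ffunP => u; rewrite !ffunE; case: (boolP (u \in S)) => uS //.
  exact/esym/eqP/H.
by rewrite P_with_tm andbC.
Qed.

Lemma condp_markov v : v \notin S -> condp beta h true S tp v = condp beta h false S tm v.
Proof.
move=> vS; rewrite /condp.
have andT s t : wsum beta h s (agree S t) = wsum beta h s (fun x => agree S t x && predT x).
  by apply: eq_bigl => x; rewrite andbT.
rewrite andT (andT false tm) !wsum_with_tm // => [|x]; last by rewrite ffunE (negbTE vS).
by rewrite invfM mulrACA divff ?mulr1 // gt_eqF // expR_gt0.
Qed.

End DomainMarkov.
End IsingLattice.

(** * The coupling *)

Section Coupling.
Variables (R : realType) (beta : R) (h : Z2 -> R) (N : nat) (U : V N -> R).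
Hypothesis beta_gt0 : 0 < beta.

Local Notation sample := (sample1 beta h U).
Local Notation samples := (sample_seq beta h U).

Lemma inCE (st : state N) u : inC st u = [&& u \in st.1.1, st.1.2 u & ~~ st.2 u].
Proof. by case: st => [[S sp] sm]; rewrite /= andbA. Qed.

Lemma inC_sampled (st : state N) u : inC st u -> u \in st.1.1.
Proof. by rewrite inCE => /andP[]. Qed.

Lemma sample1_sampled (st : state N) v : (sample st v).1.1 = v |: st.1.1.
Proof. by case: st => [[S sp] sm]. Qed.

Lemma sample1_other (st : state N) v u : u != v ->
  (sample st v).1.2 u = st.1.2 u /\ (sample st v).2 u = st.2 u.
Proof. by case: st => [[S sp] sm] /= uv; rewrite !ffunE (negbTE uv). Qed.

Lemma sample_seq_sampled (st : state N) l : (samples st l).1.1 = st.1.1 :|: [set x in l].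
Proof.
elim: l st => [|x l IH] st /=; first by apply/setP => u; rewrite !inE orbF.
by rewrite IH sample1_sampled; apply/setP => u; rewrite !inE orbCA orbA.
Qed.

Lemma sample_seq_other (st : state N) l u : u \notin l ->
  (samples st l).1.2 u = st.1.2 u /\ (samples st l).2 u = st.2 u.
Proof.
elim: l st => [|x l IH] st //=; rewrite inE negb_or => /andP[ux ul].
have [-> ->] := IH (sample st x) ul.
exact: sample1_other.
Qed.

Lemma inC_sample_seq (st : state N) l u : u \notin l -> u \in st.1.1 ->
  inC (samples st l) u = inC st u.
Proof.
move=> ul uS; rewrite !inCE sample_seq_sampled inE uS.
by have [-> ->] := sample_seq_other st ul.
Qed.

Lemma sample_seq_ind (P : state N -> Prop) (st : state N) l :
  (forall st v, P st -> v \notin st.1.1 -> P (sample st v)) ->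
  uniq l -> (forall x, x \in l -> x \notin st.1.1) -> P st -> P (samples st l).
Proof.
move=> step; elim: l st => [|x l IH] st //= /andP[xl ul] l_new Pst.
apply: IH => [//|y yl|]; last by apply: step; rewrite ?l_new ?mem_head.
rewrite sample1_sampled !inE negb_or l_new ?inE ?yl ?orbT // andbT.
by apply: contraNneq xl => <-.
Qed.

Definition ordered_state (st : state N) := forall u, u \in st.1.1 -> st.2 u -> st.1.2 u.

Lemma ordered_sample1 (st : state N) v : ordered_state st -> ordered_state (sample st v).
Proof.
case: st => [[S sp] sm] ord_st u /=; rewrite !ffunE !inE.
case: (eqVneq u v) => [->|uv] /=; last exact: ord_st.
move=> _; apply: contra => Up_le.
have mono := condp_monotone h v ord_st beta_gt0.
by apply: le_trans Up_le _; rewrite lerD2l lerN2.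
Qed.

Lemma ordered_sample_seq (st : state N) l : ordered_state st -> ordered_state (samples st l).
Proof. by elim: l st => [|x l IH] st //= ord_st; apply/IH/ordered_sample1. Qed.

Definition reaches_bdry (st : state N) u := exists p : seq (V N),
  [/\ path (@adj N) u p, all (inC st) (u :: p) & adj_bdry (last u p)].

Lemma reaches_bdry_sub (st st' : state N) u :
  {subset inC st <= inC st'} -> reaches_bdry st u -> reaches_bdry st' u.
Proof. by move=> sub [p [pth inCp bp]]; exists p; split => //; apply: sub_all inCp. Qed.

Definition decoupled (st : state N) :=
  (forall u w, u \in st.1.1 -> w \notin st.1.1 -> adj u w -> st.1.2 u = st.2 u) /\
  (forall w, w \notin st.1.1 -> ~~ adj_bdry w).

Lemma decoupled_sample1 (st : state N) v : decoupled st -> v \notin st.1.1 ->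
  decoupled (sample st v) /\ {subset inC (sample st v) <= inC st}.
Proof.
case: st => [[S sp] sm] [eq_bdry off_bdry] vS /=.
have same_p := condp_markov beta h eq_bdry off_bdry vS.
have same_spin : (~~ (U v <= 1 - condp beta h true S sp v)) =
                 (~~ (U v <= 1 - condp beta h false S sm v)) by rewrite same_p.
split; first split.
- move=> u w /=; rewrite !ffunE !inE negb_or.
  case: (eqVneq u v) => [->|uv] //= uS /andP[_]; exact: eq_bdry.
- by move=> w /=; rewrite !inE negb_or => /andP[_]; apply: off_bdry.
- move=> u; rewrite -!topredE /= !ffunE !inE.
  by case: (eqVneq u v) => [->|uv] /=; [rewrite same_spin; case: (~~ _)|].
Qed.

Lemma decoupled_sample_seq (st : state N) l :
  decoupled st -> uniq l -> (forall x, x \in l -> x \notin st.1.1) ->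
  {subset inC (samples st l) <= inC st}.
Proof.
move=> dec ul l_new.
suff [] : decoupled (samples st l) /\ {subset inC (samples st l) <= inC st} by [].
pose P st' := decoupled st' /\ {subset inC st' <= inC st}.
apply: (sample_seq_ind (P := P)) => //; last by split => // u.
move=> st' v [dec' sub'] vS'; have [? sub1] := decoupled_sample1 dec' vS'.
by split => // u /sub1/sub'.
Qed.

Lemma decoupled_closed (st : state N) : ordered_state st ->
  (forall u, inC st u -> forall w, adj u w -> w \in st.1.1) ->
  (forall w, adj_bdry w -> w \in st.1.1) -> decoupled st.
Proof.
move=> ord_st C_closed bdry_sampled; split; last by move=> w; apply: contra; apply: bdry_sampled.
move=> u w uS wS uw; have := ord_st u uS.
case Ep: (st.1.2 u); case Em: (st.2 u) => //=; last by move/(_ isT).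
move=> _; have : inC st u by rewrite inCE uS Ep Em.
by move/C_closed/(_ w uw); rewrite (negbTE wS).
Qed.

Variable ord : seq (V N).
Hypotheses (ord_uniq : uniq ord) (ord_all : forall v : V N, v \in ord).

Local Notation stages := (stages beta h U ord).

Definition rest_sites (st : state N) := [seq v <- ord | v \notin st.1.1].
Definition next_sites first A (st : state N) :=
  [seq v <- ord | (v \notin st.1.1) && adjA first A v].

Lemma stagesS n first A (st : state N) : stages n.+1 first A st =
  if ~~ first && (A == set0) then samples st (rest_sites st)
  else let st' := samples st (next_sites first A st) in
       stages n false [set v in next_sites first A st | inC st' v] st'.
Proof. by []. Qed.

Lemma rest_sites_new (st : state N) x : x \in rest_sites st -> x \notin st.1.1.
Proof. by rewrite mem_filter => /andP[]. Qed.

Lemma next_sites_new first A (st : state N) x : x \in next_sites first A st -> x \notin st.1.1.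
Proof. by rewrite mem_filter => /andP[/andP[]]. Qed.

Lemma samples_rest_sampled (st : state N) : (samples st (rest_sites st)).1.1 = setT.
Proof.
by apply/setP => u; rewrite sample_seq_sampled !inE mem_filter ord_all andbT orbN.
Qed.

Lemma stages_sampled n first A (st : state N) : (stages n first A st).1.1 = setT.
Proof.
elim: n first A st => [|n IH] first A st; first exact: samples_rest_sampled.
by rewrite stagesS; case: ifP => _; [apply: samples_rest_sampled|apply: IH].
Qed.

(* [n] is the remaining fuel of [stages]: as long as [A] is non-empty every
   stage samples a new vertex, so the fuel never runs out before [A] is empty. *)
Record stage_inv n (A : {set V N}) (st : state N) : Prop := StageInv {
  stage_ordered : ordered_state st;
  stage_reaches : forall u, inC st u -> reaches_bdry st u;
  stage_frontier : forall u, inC st u ->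
    u \in A \/ (forall w, adj u w -> w \in st.1.1);
  stage_A_inC : forall u, u \in A -> inC st u;
  stage_bdry_sampled : forall w, adj_bdry w -> w \in st.1.1;
  stage_fuel : A != set0 -> (#|{: V N}| < #|st.1.1| + n)%N }.

Lemma stage_inv_rest n A (st : state N) : stage_inv n A st -> A = set0 ->
  forall u, inC (samples st (rest_sites st)) u ->
            reaches_bdry (samples st (rest_sites st)) u.
Proof.
case=> ord_st reach frontier _ bdry_sampled _ A0 u.
have C_closed u' : inC st u' -> forall w, adj u' w -> w \in st.1.1.
  by move/frontier; rewrite A0 inE => -[].
have dec := decoupled_closed ord_st C_closed bdry_sampled.
move=> /(decoupled_sample_seq dec (filter_uniq _ ord_uniq) (@rest_sites_new st)) Cu.
apply: reaches_bdry_sub (reach u Cu) => w; rewrite -!topredE /= => Cw.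
have w_old : w \notin rest_sites st by apply: contraL (inC_sampled Cw); apply: rest_sites_new.
by rewrite inC_sample_seq // inC_sampled.
Qed.

Lemma stage_inv_step n A (st : state N) : stage_inv n.+1 A st -> A != set0 ->
  let st' := samples st (next_sites false A st) in
  stage_inv n [set v in next_sites false A st | inC st' v] st'.
Proof.
case=> ord_st reach frontier A_inC bdry_sampled fuel A_ne st'.
set todo := next_sites false A st.
have ord_st' : ordered_state st' by apply: ordered_sample_seq.
have S'E : st'.1.1 = st.1.1 :|: [set x in todo] by rewrite sample_seq_sampled.
have old_inC w : w \in st.1.1 -> inC st' w = inC st w.
  by move=> wS; apply: inC_sample_seq => //; apply: contraL wS; apply: next_sites_new.
clearbody st'.
have C_grow : {subset inC st <= inC st'}.
  by move=> w; rewrite -!topredE /= => Cw; rewrite old_inC ?inC_sampled.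
have C_new w : inC st' w -> w \notin todo -> inC st w.
  move=> C'w wt; rewrite -old_inC //.
  by move: (inC_sampled C'w); rewrite S'E !inE (negbTE wt) orbF.
split.
- exact: ord_st'.
- move=> u Cu; case: (boolP (u \in todo)) => ut; last first.
    by apply: (reaches_bdry_sub C_grow); apply/reach/C_new.
  move: ut; rewrite mem_filter => /andP[/andP[_ /existsP[a /andP[aA au]]] _].
  have [p [pth Cp bp]] := reaches_bdry_sub C_grow (reach a (A_inC a aA)).
  by exists (a :: p); split; rewrite //= ?Cu // adj_sym au.
- move=> u Cu; case: (boolP (u \in todo)) => ut; first by left; rewrite inE ut Cu.
  right => w uw; rewrite S'E inE.
  case: (frontier u (C_new u Cu ut)) => [uA|nb]; last by rewrite nb.
  case: (boolP (w \in st.1.1)) => //= wS.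
  by rewrite inE mem_filter ord_all wS andbT; apply/existsP; exists u; rewrite uA uw.
- by move=> u; rewrite inE => /andP[].
- by move=> w /bdry_sampled wS; rewrite S'E inE wS.
- case/set0Pn => x; rewrite inE => /andP[xt _].
  have grow : (#|st.1.1| < #|st'.1.1|)%N.
    apply/proper_card/properP; split; first by rewrite S'E subsetUl.
    by exists x; rewrite ?S'E ?inE ?xt ?orbT // (next_sites_new xt).
  by apply: leq_trans (fuel A_ne) _; rewrite addnS -addSn leq_add2r.
Qed.

Lemma stages_reaches n A (st : state N) : stage_inv n A st ->
  forall u, inC (stages n false A st) u -> reaches_bdry (stages n false A st) u.
Proof.
elim: n A st => [|n IH] A st inv.
  have A0 : A = set0.
    by apply/eqP; apply: contraT => /(stage_fuel inv); rewrite addn0 ltnNge max_card.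
  exact: stage_inv_rest inv A0.
rewrite stagesS /=; case: eqP => [A0|/eqP A_ne]; first exact: stage_inv_rest inv A0.
exact/IH/stage_inv_step.
Qed.

Lemma first_stage_inv :
  let st1 := samples (init_state N) (next_sites true set0 (init_state N)) in
  stage_inv #|{: V N}|.+1 [set v in next_sites true set0 (init_state N) | inC st1 v] st1.
Proof.
move=> st1; set todo := next_sites true _ _.
have todoE x : (x \in todo) = adj_bdry x by rewrite mem_filter ord_all andbT inE.
have ord_st1 : ordered_state st1 by apply: ordered_sample_seq => u; rewrite inE.
have S1E : st1.1.1 = [set x in todo] by rewrite sample_seq_sampled set0U.
clearbody st1.
have C1_todo u : inC st1 u -> u \in todo by move/inC_sampled; rewrite S1E inE.
split.
- exact: ord_st1.
- by move=> u Cu; exists [::]; split; rewrite //= ?Cu // -todoE C1_todo.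
- by move=> u Cu; left; rewrite inE C1_todo.
- by move=> u; rewrite inE => /andP[].
- by move=> w; rewrite S1E inE todoE.
- by rewrite addnS ltnS leq_addl.
Qed.

Lemma coupling_reaches u :
  inC (coupling beta h U ord) u -> reaches_bdry (coupling beta h U ord) u.
Proof. by rewrite /coupling stagesS; apply: (stages_reaches first_stage_inv). Qed.

Lemma Cset_inC u : Cset beta h U ord u = inC (coupling beta h U ord) u.
Proof.
rewrite /Cset inCE stages_sampled inE.
by case: (coupling beta h U ord) => [[? ?] ?].
Qed.

End Coupling.

Theorem lemma3p19 (R : realType) (beta : R) (h : Z2 -> R) (N : nat)
    (ord : seq (V N)) (U : V N -> R) :
  0 < beta ->
  uniq ord -> (forall v : V N, v \in ord) ->
  (forall v : V N, 0 <= U v <= 1) ->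
  Cset beta h U ord (origin N) ->
  exists p : seq (V N),
    [/\ path (@adj N) (origin N) p,
        all (Cset beta h U ord) (origin N :: p)
      & adj_bdry (last (origin N) p)].
Proof.
(* The range of U is irrelevant: only the order of the thresholds 1 - p+ <= 1 - p- matters. *)
move=> beta_gt0 ord_uniq ord_all _.
rewrite Cset_inC // => /coupling_reaches-/(_ beta_gt0 ord_uniq ord_all) [p [pth Cp bp]].
by exists p; split => //; apply: sub_all Cp => w; rewrite Cset_inC.
Qed.
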